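(* Let $I,J\subset\mathbb{R}$ be intervals, $f:I\times J\to I$, $f_\lambda(x)=f(x,\lambda)$, $\lambda_0\in J$, $f_0=f_{\lambda_0}$. Assume: (H1) $f$ is a $C^1$ family of $C^2$ interval maps; (H2) $f_0$ is not constant on any interval; (H3) $f_0$ has at most one of: (a) a non-hyperbolic fixed point or periodic orbit, which as $\lambda$ varies is a generic codimension-one period-doubling or saddle-node bifurcation; (b) one critical point which constitutes a tangency between stable and unstable manifolds of fixed points or periodic orbits, generic in that as $\lambda$ varies through $\lambda_0$ the critical point moves from one side of the periodic point to the other; (H4) for each $\lambda$, $x_\lambda$ is a repelling fixed point of $f_\lambda$, $x_0:=x_{\lambda_0}$, and $y$ is a homoclinic point to $x_0$ for $f_0$; (H5) the homoclinic orbit containing $y$ at $\lambda_0$ contains only one critical point of $f_0$; (H6) $w$ is a homoclinic tangency point to $x_0$ for $f_0$ contained in at least one homoclinic orbit $(z_{-k})_{k\ge0}$, with $w=z_{-L}$. If $(w,\lambda_0)$ is a chain explosion point, then for every $k\ge L$ (i.e. every preimage $z_{-k}$ of $w$ in this homoclinic orbit), $(z_{-k},\lambda_0)$ is a chain explosion point.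
   Context: An $\epsilon$-chain for $g$ from $x$ to $y$: $z_0=x,\dots,z_N=y$ with $|g(z_{n-1})-z_n|<\epsilon$; $x$ is chain recurrent if for every $\epsilon>0$ there is such a chain from $x$ to itself with $N>0$. $(x,\lambda_0)$ is a chain explosion point if $x$ is chain recurrent for $f_{\lambda_0}$ but some neighborhood of $x$ contains no chain recurrent point of $f_\lambda$ for all $\lambda$ on one side of $\lambda_0$. For a repelling fixed point $x_0$, $y$ is homoclinic to $x_0$ if $y$ lies in the unstable manifold of $x_0$ and $f_0^K(y)=x_0$ for some $K>0$. A homoclinic orbit is a sequence $(z_{-k})_{k\ge0}$ with $z_0=x_0$, $z_{-K}=y$ for some $K$, $f_0(z_{-k})=z_{-k+1}$, $z_{-k}\to x_0$; $w=z_{-L}$ is a homoclinic tangency point if the graph of $f_0$ has a horizontal tangent at $w$. *)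

From Stdlib Require Import Reals Lra.
Open Scope R_scope.

Definition is_interval (D : R -> Prop) : Prop :=
  (forall a b t, D a -> D b -> a <= t <= b -> D t) /\
  exists a b, a < b /\ D a /\ D b.

(** [g'] is the derivative of [g] relative to the set [D]
    (one-sided at endpoints of an interval). *)
Definition deriv_on (D : R -> Prop) (g g' : R -> R) : Prop :=
  forall t, D t -> forall eps, 0 < eps -> exists delta, 0 < delta /\
    forall s, D s -> s <> t -> Rabs (s - t) < delta ->
      Rabs ((g s - g t) / (s - t) - g' t) < eps.

Definition cont_on (D : R -> Prop) (g : R -> R) : Prop :=
  forall t, D t -> forall eps, 0 < eps -> exists delta, 0 < delta /\
    forall s, D s -> Rabs (s - t) < delta -> Rabs (g s - g t) < eps.

Definition cont2_on (I J : R -> Prop) (h : R -> R -> R) : Prop :=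
  forall t l, I t -> J l -> forall eps, 0 < eps -> exists delta, 0 < delta /\
    forall t' l', I t' -> J l' -> Rabs (t' - t) < delta -> Rabs (l' - l) < delta ->
      Rabs (h t' l' - h t l) < eps.

Definition fam (f : R -> R -> R) (l : R) : R -> R := fun t => f t l.

(** (H1): f : I x J -> I is a C^1 family of C^2 interval maps; [fx] is the
    partial derivative in x. *)
Definition C1_family_C2 (I J : R -> Prop) (f fx : R -> R -> R) : Prop :=
  (forall t l, I t -> J l -> I (f t l)) /\
  (forall l, J l -> deriv_on I (fam f l) (fam fx l)) /\
  (exists fl : R -> R -> R,
      (forall t, I t -> deriv_on J (f t) (fl t)) /\
      cont2_on I J fx /\ cont2_on I J fl) /\
  (exists fxx : R -> R -> R,
      forall l, J l -> deriv_on I (fam fx l) (fam fxx l) /\ cont_on I (fam fxx l)).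

Definition not_const_on_intervals (I : R -> Prop) (g : R -> R) : Prop :=
  forall a b, a < b -> (forall t, a <= t <= b -> I t) ->
    exists s t, a <= s <= b /\ a <= t <= b /\ g s <> g t.

(** Derivative of the n-th iterate of f_l at p (chain rule product). *)
Fixpoint dIter (f fx : R -> R -> R) (l : R) (n : nat) (p : R) : R :=
  match n with
  | O => 1
  | S n' => dIter f fx l n' p * fx (Nat.iter n' (fam f l) p) l
  end.

Definition periodic (I : R -> Prop) (g : R -> R) (n : nat) (p : R) : Prop :=
  (0 < n)%nat /\ I p /\ Nat.iter n g p = p.

Definition min_periodic (I : R -> Prop) (g : R -> R) (n : nat) (p : R) : Prop :=
  periodic I g n p /\ forall j, (0 < j < n)%nat -> Nat.iter j g p <> p.

(** Unstable manifold of a point p of period n of f_l: points having a backward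
    f_l^n-orbit in I converging to p. *)
Definition Wu (I : R -> Prop) (f : R -> R -> R) (l : R) (p : R) (n : nat) (y : R) : Prop :=
  exists z : nat -> R, z O = y /\ (forall k, I (z k)) /\
    (forall k, Nat.iter n (fam f l) (z (S k)) = z k) /\ Un_cv z p.

Definition repelling_fixed (I : R -> Prop) (f fx : R -> R -> R) (l : R) (p : R) : Prop :=
  I p /\ f p l = p /\ 1 < Rabs (fx p l).

Definition homoclinic_point (I : R -> Prop) (f : R -> R -> R) (l x0 y : R) : Prop :=
  Wu I f l x0 1 y /\ exists K, (0 < K)%nat /\ Nat.iter K (fam f l) y = x0.

(** A homoclinic orbit (z_{-k})_{k>=0} to x0, encoded as z k = z_{-k}. *)
Definition HomOrbit (I : R -> Prop) (f : R -> R -> R) (l x0 : R) (z : nat -> R) : Prop :=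
  z O = x0 /\ (forall k, I (z k)) /\ (forall k, f (z (S k)) l = z k) /\ Un_cv z x0.

Definition only_one_crit_on_orbits (I : R -> Prop) (f fx : R -> R -> R) (l x0 y : R) : Prop :=
  forall z, HomOrbit I f l x0 z -> (exists K, z K = y) ->
    exists c, (exists k, z k = c) /\ fx c l = 0 /\
      forall k, fx (z k) l = 0 -> z k = c.

Definition all_hyperbolic (I : R -> Prop) (f fx : R -> R -> R) (l0 : R) : Prop :=
  forall n q, periodic I (fam f l0) n q -> Rabs (dIter f fx l0 n q) <> 1.

Definition nonhyp_periodic (I : R -> Prop) (f fx : R -> R -> R) (l0 q : R) : Prop :=
  exists n, periodic I (fam f l0) n q /\ Rabs (dIter f fx l0 n q) = 1.

(** A critical point which constitutes a tangency between the unstable manifold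
    of a (repelling) periodic orbit and the stable manifold (the grand preimages)
    of a (repelling) periodic orbit. *)
Definition crit_tangency (I : R -> Prop) (f fx : R -> R -> R) (l0 c : R) : Prop :=
  I c /\ fx c l0 = 0 /\
  (exists n p, periodic I (fam f l0) n p /\ 1 < Rabs (dIter f fx l0 n p) /\ Wu I f l0 p n c) /\
  (exists m q K, periodic I (fam f l0) m q /\ 1 < Rabs (dIter f fx l0 m q) /\
     Nat.iter K (fam f l0) c = q).

Definition ball (a r : R) : R -> Prop := fun t => Rabs (t - a) < r.

Definition generic_SN (I J : R -> Prop) (f fx : R -> R -> R) (l0 p : R) (n : nat) : Prop :=
  dIter f fx l0 n p = 1 /\
  (forall g1 g2, deriv_on I (Nat.iter n (fam f l0)) g1 -> deriv_on I g1 g2 -> g2 p <> 0) /\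
  (forall h, deriv_on J (fun l => Nat.iter n (fam f l) p) h -> h l0 <> 0).

Definition generic_PD (I J : R -> Prop) (f fx : R -> R -> R) (l0 p : R) (n : nat) : Prop :=
  dIter f fx l0 n p = -1 /\
  exists (pc : R -> R) (eta : R), 0 < eta /\ pc l0 = p /\ cont_on (ball l0 eta) pc /\
    (forall l, Rabs (l - l0) < eta -> J l /\ I (pc l) /\ Nat.iter n (fam f l) (pc l) = pc l) /\
    (forall l m, l0 - eta < l < l0 -> l0 < m < l0 + eta ->
       (dIter f fx l n (pc l) + 1) * (dIter f fx m n (pc m) + 1) < 0).

(** Generic unfolding of the critical tangency at c: as l passes through l0, the
    (continued) critical point moves from one side of the (continued) periodic
    point to the other (measured after the K iterates that bring c onto q). *)
Definition generic_tangency (I J : R -> Prop) (f fx : R -> R -> R) (l0 c : R) : Prop :=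
  exists (q : R) (m K : nat) (qc cc : R -> R) (eta : R),
    0 < eta /\ periodic I (fam f l0) m q /\ Nat.iter K (fam f l0) c = q /\
    qc l0 = q /\ cc l0 = c /\ cont_on (ball l0 eta) qc /\ cont_on (ball l0 eta) cc /\
    (forall l, Rabs (l - l0) < eta ->
       J l /\ I (qc l) /\ I (cc l) /\ Nat.iter m (fam f l) (qc l) = qc l /\ fx (cc l) l = 0) /\
    (forall l l', l0 - eta < l < l0 -> l0 < l' < l0 + eta ->
       (Nat.iter K (fam f l) (cc l) - qc l) * (Nat.iter K (fam f l') (cc l') - qc l') < 0).

Definition H3 (I J : R -> Prop) (f fx : R -> R -> R) (l0 : R) : Prop :=
  (all_hyperbolic I f fx l0 /\ forall c, ~ crit_tangency I f fx l0 c)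
  \/
  (exists p n, min_periodic I (fam f l0) n p /\ Rabs (dIter f fx l0 n p) = 1 /\
     (forall q, nonhyp_periodic I f fx l0 q -> exists i, q = Nat.iter i (fam f l0) p) /\
     (generic_SN I J f fx l0 p n \/ generic_PD I J f fx l0 p n) /\
     forall c, ~ crit_tangency I f fx l0 c)
  \/
  (all_hyperbolic I f fx l0 /\
   exists c, crit_tangency I f fx l0 c /\
     (forall c', crit_tangency I f fx l0 c' -> c' = c) /\
     generic_tangency I J f fx l0 c).

Definition eps_chain (I : R -> Prop) (g : R -> R) (eps : R) (N : nat) (a b : R) : Prop :=
  exists z : nat -> R, z O = a /\ z N = b /\ (forall n, (n <= N)%nat -> I (z n)) /\
    forall n, (1 <= n <= N)%nat -> Rabs (g (z (n - 1)%nat) - z n) < eps.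

Definition chain_recurrent (I : R -> Prop) (g : R -> R) (a : R) : Prop :=
  forall eps, 0 < eps -> exists N, (0 < N)%nat /\ eps_chain I g eps N a a.

Definition chain_explosion (I J : R -> Prop) (f : R -> R -> R) (a l0 : R) : Prop :=
  chain_recurrent I (fam f l0) a /\
  exists delta eta s, 0 < delta /\ 0 < eta /\ (s = 1 \/ s = -1) /\
    forall l, 0 < s * (l - l0) < eta ->
      J l /\ forall b, Rabs (b - a) < delta -> ~ chain_recurrent I (fam f l) b.

(** Chain recurrence is carried forward by a continuous map, and the iterate
    [f_l^n] depends jointly continuously on the point and on [l] (by the mean
    value inequality, since [f] is continuous in [l] and [∂_x f] is jointly
    continuous).  Hence, if [f_0^n (a) = w] and there were chain recurrent
    points of [f_l] arbitrarily close to [a] for [l] on the exploding side of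
    [l0], their images under [f_l^n] would be chain recurrent points of [f_l]
    arbitrarily close to [w].  Every point [z_{-k}] of the homoclinic orbit is
    chain recurrent for [f_0]: follow the orbit forward to [x0], jump to a point
    [z_{-m}] far back in the orbit, hence close to [x0], and follow the orbit
    forward again. *)

From Stdlib Require Import Bool Reals Lra Lia.
Open Scope R_scope.

Definition convex (D : R -> Prop) : Prop :=
  forall a b t, D a -> D b -> a <= t <= b -> D t.

Lemma is_interval_convex D : is_interval D -> convex D.
Proof. intros [Hconv _]; exact Hconv. Qed.

Lemma Rabs_lt_Rmin_l a b c : Rabs a < Rmin b c -> Rabs a < b.
Proof. intros H; eapply Rlt_le_trans; [exact H | apply Rmin_l]. Qed.

Lemma Rabs_lt_Rmin_r a b c : Rabs a < Rmin b c -> Rabs a < c.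
Proof. intros H; eapply Rlt_le_trans; [exact H | apply Rmin_r]. Qed.

Lemma deriv_on_cont_on D g g' : deriv_on D g g' -> cont_on D g.
Proof.
  intros Hd t Dt eps Heps.
  destruct (Hd t Dt 1 Rlt_0_1) as [d [Hd0 Hquot]].
  set (K := Rabs (g' t) + 1).
  assert (HK : 0 < K) by (unfold K; pose proof (Rabs_pos (g' t)); lra).
  exists (Rmin d (eps / K)); split.
  { apply Rmin_pos; [lra | apply Rdiv_lt_0_compat; lra]. }
  intros s Ds Hst.
  destruct (Req_dec s t) as [-> | Hne].
  { rewrite Rminus_diag, Rabs_R0; lra. }
  assert (Hslope : Rabs ((g s - g t) / (s - t)) < K).
  { pose proof (Hquot s Ds Hne (Rabs_lt_Rmin_l _ _ _ Hst)) as Hq.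
    pose proof (Rabs_triang ((g s - g t) / (s - t) - g' t) (g' t)) as T.
    replace ((g s - g t) / (s - t) - g' t + g' t) with ((g s - g t) / (s - t)) in T
      by ring.
    unfold K; lra. }
  replace (g s - g t) with ((g s - g t) / (s - t) * (s - t))
    by (field; intro; apply Hne; lra).
  rewrite Rabs_mult.
  pose proof (Rabs_lt_Rmin_r _ _ _ Hst) as Hsmall.
  apply Rle_lt_trans with (K * Rabs (s - t)).
  { apply Rmult_le_compat_r; [apply Rabs_pos | lra]. }
  replace eps with (K * (eps / K)) by (field; lra).
  apply Rmult_lt_compat_l; lra.
Qed.

Lemma deriv_on_derivable_pt_lim D g g' a b u :
  convex D -> deriv_on D g g' -> D a -> D b -> a < u < b ->
  derivable_pt_lim g u (g' u).
Proof.
  intros Hconv Hd Da Db Hu eps Heps.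
  destruct (Hd u (Hconv a b u Da Db ltac:(lra)) eps Heps) as [d [Hd0 Hquot]].
  assert (Hr : 0 < Rmin d (Rmin (u - a) (b - u))) by (repeat apply Rmin_pos; lra).
  exists (mkposreal _ Hr); intros h Hh0 Hh; simpl in Hh.
  pose proof (Rabs_lt_Rmin_l _ _ _ Hh) as Hhd.
  pose proof (Rabs_lt_Rmin_r _ _ _ Hh) as Hhab.
  assert (Hab : a < u + h < b).
  { pose proof (Rabs_lt_Rmin_l _ _ _ Hhab); pose proof (Rabs_lt_Rmin_r _ _ _ Hhab).
    split_Rabs; lra. }
  specialize (Hquot (u + h)); replace (u + h - u) with h in Hquot by ring.
  apply Hquot; [apply (Hconv a b); auto; lra | intro; apply Hh0; lra | exact Hhd].
Qed.

Lemma mean_value_ineq D g g' a b M :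
  convex D -> deriv_on D g g' -> D a -> D b -> a < b ->
  (forall u, a <= u <= b -> Rabs (g' u) <= M) ->
  Rabs (g b - g a) <= M * (b - a).
Proof.
  intros Hconv Hd Da Db Hab HM.
  assert (HM0 : 0 <= M) by (eapply Rle_trans; [apply Rabs_pos | apply (HM a); lra]).
  assert (Hinner : forall h, 0 < h < (b - a) / 2 ->
            Rabs (g (b - h) - g (a + h)) <= M * (b - a)).
  { intros h Hh.
    destruct (MVT_cor2 g g' (a + h) (b - h)) as [c [Ec Hc]]; [lra | |].
    { intros c Hc; apply (deriv_on_derivable_pt_lim D g g' a b); auto; lra. }
    rewrite Ec, Rabs_mult, (Rabs_right (b - h - (a + h))) by lra.
    apply Rle_trans with (M * (b - h - (a + h))).
    - apply Rmult_le_compat_r; [lra | apply HM; lra].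
    - apply Rmult_le_compat_l; lra. }
  destruct (Rle_lt_dec (Rabs (g b - g a)) (M * (b - a))) as [| Hgap]; [assumption |].
  exfalso; set (e := Rabs (g b - g a) - M * (b - a)).
  destruct (deriv_on_cont_on D g g' Hd a Da (e / 2)) as [da [Hda Ha]]; [unfold e; lra |].
  destruct (deriv_on_cont_on D g g' Hd b Db (e / 2)) as [db [Hdb Hb]]; [unfold e; lra |].
  set (h := Rmin da (Rmin db ((b - a) / 2)) / 2).
  pose proof (Rmin_l da (Rmin db ((b - a) / 2))).
  pose proof (Rmin_r da (Rmin db ((b - a) / 2))).
  pose proof (Rmin_l db ((b - a) / 2)); pose proof (Rmin_r db ((b - a) / 2)).
  assert (0 < Rmin da (Rmin db ((b - a) / 2))) by (repeat apply Rmin_pos; lra).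
  assert (Hh : 0 < h /\ h < da /\ h < db /\ h < (b - a) / 2) by (unfold h; lra).
  assert (Hleft : Rabs (g (a + h) - g a) < e / 2).
  { apply Ha; [apply (Hconv a b); auto; lra |].
    replace (a + h - a) with h by ring; rewrite Rabs_right; lra. }
  assert (Hright : Rabs (g (b - h) - g b) < e / 2).
  { apply Hb; [apply (Hconv a b); auto; lra |].
    replace (b - h - b) with (- h) by ring; rewrite Rabs_Ropp, Rabs_right; lra. }
  pose proof (Hinner h ltac:(lra)).
  pose proof (Rabs_triang (g b - g (b - h)) (g (b - h) - g a)) as T1.
  pose proof (Rabs_triang (g (b - h) - g (a + h)) (g (a + h) - g a)) as T2.
  replace (g b - g (b - h) + (g (b - h) - g a)) with (g b - g a) in T1 by ring.
  replace (g (b - h) - g (a + h) + (g (a + h) - g a)) with (g (b - h) - g a) in T2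
    by ring.
  rewrite Rabs_minus_sym in Hright; unfold e in *; lra.
Qed.

Lemma mean_value_ineq_abs D g g' a b M :
  convex D -> deriv_on D g g' -> D a -> D b ->
  (forall u, Rmin a b <= u <= Rmax a b -> Rabs (g' u) <= M) ->
  Rabs (g b - g a) <= M * Rabs (b - a).
Proof.
  intros Hconv Hd Da Db HM.
  destruct (Rtotal_order a b) as [Hab | [<- | Hab]].
  - rewrite (Rabs_right (b - a)) by lra; apply (mean_value_ineq D g g'); auto.
    intros u Hu; apply HM; rewrite Rmin_left, Rmax_right; lra.
  - rewrite !Rminus_diag, Rabs_R0, Rmult_0_r; lra.
  - rewrite Rabs_minus_sym, (Rabs_minus_sym b a), (Rabs_right (a - b)) by lra.
    apply (mean_value_ineq D g g'); auto.
    intros u Hu; apply HM; rewrite Rmin_right, Rmax_left; lra.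
Qed.

Lemma cont2_on_fam I J h l : cont2_on I J h -> J l -> cont_on I (fam h l).
Proof.
  intros Hh Jl t It eps Heps.
  destruct (Hh t l It Jl eps Heps) as [d [Hd0 Hd]].
  exists d; split; [exact Hd0 |].
  intros s Is Hs; apply Hd; auto; rewrite Rminus_diag, Rabs_R0; exact Hd0.
Qed.

Lemma cont2_on_of_partial_derivative I J f fx :
  convex I -> (forall l, J l -> deriv_on I (fam f l) (fam fx l)) ->
  cont2_on I J fx -> (forall t, I t -> cont_on J (f t)) -> cont2_on I J f.
Proof.
  intros Hconv Hdx Hfx Hfl t0 l0 It0 Jl0 eps Heps.
  destruct (Hfx t0 l0 It0 Jl0 1 Rlt_0_1) as [d1 [Hd1 Hbound]].
  set (M := Rabs (fx t0 l0) + 1).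
  assert (HM : 0 < M) by (unfold M; pose proof (Rabs_pos (fx t0 l0)); lra).
  destruct (Hfl t0 It0 l0 Jl0 (eps / 2)) as [d2 [Hd2 Hcl]]; [lra |].
  assert (Hd3 : 0 < eps / (2 * M)) by (apply Rdiv_lt_0_compat; lra).
  exists (Rmin d1 (Rmin d2 (eps / (2 * M)))); split; [repeat apply Rmin_pos; lra |].
  intros t l It Jl Ht Hl.
  pose proof (Rabs_lt_Rmin_l _ _ _ Ht) as Ht1.
  pose proof (Rabs_lt_Rmin_r _ _ _ Ht) as Ht23.
  pose proof (Rabs_lt_Rmin_r _ _ _ Hl) as Hl23.
  pose proof (Rabs_lt_Rmin_l _ _ _ Hl23) as Hl2.
  pose proof (Rabs_lt_Rmin_r _ _ _ Ht23) as Ht3.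
  assert (Hx : Rabs (f t l - f t0 l) <= M * Rabs (t - t0)).
  { apply (mean_value_ineq_abs I (fam f l) (fam fx l)); auto.
    intros u Hu; unfold fam.
    assert (Iu : I u).
    { apply (Hconv (Rmin t0 t) (Rmax t0 t)); auto;
        unfold Rmin, Rmax; destruct (Rle_dec t0 t); auto. }
    assert (Hu1 : Rabs (u - t0) < d1).
    { revert Hu; unfold Rmin, Rmax; destruct (Rle_dec t0 t); split_Rabs; lra. }
    pose proof (Hbound u l Iu Jl Hu1 (Rabs_lt_Rmin_l _ _ _ Hl)).
    pose proof (Rabs_triang (fx u l - fx t0 l0) (fx t0 l0)) as T.
    replace (fx u l - fx t0 l0 + fx t0 l0) with (fx u l) in T by ring.
    unfold M; lra. }
  assert (Hlam : Rabs (f t0 l - f t0 l0) < eps / 2) by (apply Hcl; auto).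
  assert (Hsmall : M * Rabs (t - t0) < eps / 2).
  { replace (eps / 2) with (M * (eps / (2 * M))) by (field; lra).
    apply Rmult_lt_compat_l; lra. }
  pose proof (Rabs_triang (f t l - f t0 l) (f t0 l - f t0 l0)) as T.
  replace (f t l - f t0 l + (f t0 l - f t0 l0)) with (f t l - f t0 l0) in T by ring.
  lra.
Qed.

Section Iterates.

Variables (I J : R -> Prop) (f : R -> R -> R).
Hypothesis f_maps : forall t l, I t -> J l -> I (f t l).

Lemma iter_fam_in n l t : J l -> I t -> I (Nat.iter n (fam f l) t).
Proof. intros Jl It; induction n as [| n IH]; [exact It | apply f_maps; auto]. Qed.

Lemma cont2_on_iter n : cont2_on I J f ->
  cont2_on I J (fun t l => Nat.iter n (fam f l) t).
Proof.
  intros Hf; induction n as [| n IH]; intros t0 l0 It0 Jl0 eps Heps.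
  { exists eps; split; auto. }
  set (p0 := Nat.iter n (fam f l0) t0).
  destruct (Hf p0 l0 (iter_fam_in n l0 t0 Jl0 It0) Jl0 eps Heps) as [d1 [Hd1 Hstep]].
  destruct (IH t0 l0 It0 Jl0 d1 Hd1) as [d2 [Hd2 Hprev]].
  exists (Rmin d1 d2); split; [apply Rmin_pos; lra |].
  intros t l It Jl Ht Hl; simpl; unfold fam at 1 3; fold p0.
  apply Hstep; auto using iter_fam_in.
  - apply Hprev; auto; [apply (Rabs_lt_Rmin_r _ _ _ Ht) | apply (Rabs_lt_Rmin_r _ _ _ Hl)].
  - apply (Rabs_lt_Rmin_l _ _ _ Hl).
Qed.

End Iterates.

Section Chains.

Variables (I : R -> Prop) (g : R -> R).
Hypothesis g_maps : forall t, I t -> I (g t).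

Lemma eps_chain_step eps a b :
  I a -> I b -> Rabs (g a - b) < eps -> eps_chain I g eps 1 a b.
Proof.
  intros Ia Ib Hab.
  exists (fun n => if Nat.eqb n 0 then a else b); repeat split; auto.
  - intros [| n] _; auto.
  - intros n Hn; replace n with 1%nat by lia; exact Hab.
Qed.

Lemma eps_chain_cat eps N1 N2 a b c :
  eps_chain I g eps N1 a b -> eps_chain I g eps N2 b c ->
  eps_chain I g eps (N1 + N2) a c.
Proof.
  intros [u [u0 [uN [uI uS]]]] [v [v0 [vN [vI vS]]]].
  exists (fun n => if Nat.leb n N1 then u n else v (n - N1)%nat).
  split; [rewrite u0; reflexivity |].
  split.
  { destruct (Nat.leb_spec (N1 + N2) N1).
    - assert (N2 = 0%nat) by lia; subst N2.
      rewrite Nat.add_0_r, uN, <- v0; exact vN.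
    - replace (N1 + N2 - N1)%nat with N2 by lia; exact vN. }
  split.
  { intros n Hn; destruct (Nat.leb_spec n N1); [apply uI | apply vI]; lia. }
  intros n Hn.
  destruct (Nat.leb_spec n N1), (Nat.leb_spec (n - 1) N1); try lia.
  - apply uS; lia.
  - replace (n - 1)%nat with N1 by lia; rewrite uN, <- v0.
    replace (n - N1)%nat with 1%nat by lia; apply (vS 1%nat); lia.
  - replace (n - 1 - N1)%nat with (n - N1 - 1)%nat by lia; apply vS; lia.
Qed.

Lemma eps_chain_iter eps n a :
  0 < eps -> I a -> eps_chain I g eps n a (Nat.iter n g a).
Proof.
  intros Heps Ia; induction n as [| n IH].
  - exists (fun _ => a); repeat split; auto; intros; lia.
  - assert (In : I (Nat.iter n g a)) by (clear IH; induction n; simpl; auto).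
    change (eps_chain I g eps (S n) a (g (Nat.iter n g a))); rewrite <- Nat.add_1_r.
    apply (eps_chain_cat _ _ _ _ (Nat.iter n g a)); [exact IH |].
    apply eps_chain_step; auto.
    rewrite Rminus_diag, Rabs_R0; exact Heps.
Qed.

Lemma chain_recurrent_in b : chain_recurrent I g b -> I b.
Proof.
  intros Hcr; destruct (Hcr 1 Rlt_0_1) as [N [_ [u [u0 [_ [uI _]]]]]].
  rewrite <- u0; apply uI; lia.
Qed.

Hypothesis g_cont : cont_on I g.

Lemma chain_recurrent_image b : chain_recurrent I g b -> chain_recurrent I g (g b).
Proof.
  intros Hcr eps Heps.
  pose proof (g_maps b (chain_recurrent_in b Hcr)) as Igb.
  destruct (g_cont (g b) Igb (eps / 2)) as [dc [Hdc Hgc]]; [lra |].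
  destruct (Hcr (Rmin (eps / 2) dc)) as [N [HN [u [u0 [uN [uI uS]]]]]].
  { apply Rmin_pos; lra. }
  (* Replace both endpoints of the chain b = u 0, u 1, ..., u N = b by g b,
     shifting the interior by one: v (n - 1) differs from u n only for n = 1,
     and v n from g (u n) only when n < N. *)
  set (v := fun n => if (Nat.eqb n 0 || Nat.leb N n)%bool then g b else u (S n)).
  exists N; split; [exact HN |].
  exists v; split; [reflexivity |].
  split; [unfold v; rewrite Nat.leb_refl, orb_true_r; reflexivity |].
  split.
  { intros n Hn; unfold v.
    destruct (Nat.eqb_spec n 0), (Nat.leb_spec N n); simpl; auto; apply uI; lia. }
  intros n Hn.
  assert (Hbefore : Rabs (g (v (n - 1)%nat) - g (u n)) < eps / 2).
  { unfold v; destruct (Nat.eqb_spec (n - 1) 0) as [E | E]; simpl.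
    - replace n with 1%nat by lia.
      rewrite Rabs_minus_sym; apply Hgc; [apply uI; lia |].
      rewrite Rabs_minus_sym, <- u0; apply (Rabs_lt_Rmin_r _ (eps / 2)), (uS 1%nat); lia.
    - destruct (Nat.leb_spec N (n - 1)); [lia |].
      replace (S (n - 1)) with n by lia; rewrite Rminus_diag, Rabs_R0; lra. }
  assert (Hafter : Rabs (g (u n) - v n) < eps / 2).
  { unfold v; destruct (Nat.eqb_spec n 0) as [E | E]; [lia |].
    destruct (Nat.leb_spec N n); simpl.
    - replace n with N by lia; rewrite uN, Rminus_diag, Rabs_R0; lra.
    - apply (Rabs_lt_Rmin_l _ _ dc).
      replace n with (S n - 1)%nat at 1 by lia; apply uS; lia. }
  pose proof (Rabs_triang (g (v (n - 1)%nat) - g (u n)) (g (u n) - v n)) as T.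
  replace (g (v (n - 1)%nat) - g (u n) + (g (u n) - v n))
    with (g (v (n - 1)%nat) - v n) in T by ring.
  lra.
Qed.

Lemma chain_recurrent_iter n b :
  chain_recurrent I g b -> chain_recurrent I g (Nat.iter n g b).
Proof. intros Hcr; induction n; simpl; auto using chain_recurrent_image. Qed.

End Chains.

Lemma HomOrbit_iter I f l x0 z : HomOrbit I f l x0 z ->
  forall j m, Nat.iter j (fam f l) (z (j + m)%nat) = z m.
Proof.
  intros [_ [_ [zS _]]] j; induction j as [| j IH]; intros m; simpl; auto.
  replace (S (j + m)) with (j + S m)%nat by lia; rewrite IH; apply zS.
Qed.

Lemma HomOrbit_chain_recurrent I f l x0 z k :
  (forall t, I t -> I (f t l)) -> f x0 l = x0 -> HomOrbit I f l x0 z ->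
  chain_recurrent I (fam f l) (z k).
Proof.
  intros Hmaps Hfix Hz eps Heps.
  pose proof Hz as [z0 [zI [_ zcv]]].
  destruct (zcv eps Heps) as [M HM].
  set (m := (M + k)%nat).
  exists (k + 1 + (m - k))%nat; split; [lia |].
  apply (eps_chain_cat _ _ _ _ _ _ (z m)).
  - apply (eps_chain_cat _ _ _ _ _ _ x0).
    + rewrite <- z0, <- (HomOrbit_iter _ _ _ _ _ Hz k 0), Nat.add_0_r.
      apply eps_chain_iter; auto.
    + apply eps_chain_step; auto; [rewrite <- z0; auto |].
      unfold fam; rewrite Hfix, Rabs_minus_sym; apply (HM m); unfold m; lia.
  - rewrite <- (HomOrbit_iter _ _ _ _ _ Hz (m - k) k).
    replace (m - k + k)%nat with m by (unfold m; lia).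
    apply eps_chain_iter; auto.
Qed.

Lemma chain_explosion_of_iter I J f l0 n a :
  (forall t l, I t -> J l -> I (f t l)) -> cont2_on I J f -> J l0 -> I a ->
  chain_recurrent I (fam f l0) a ->
  chain_explosion I J f (Nat.iter n (fam f l0) a) l0 ->
  chain_explosion I J f a l0.
Proof.
  intros Hmaps Hf Jl0 Ia Hcr [_ [delta [eta [s [Hdelta [Heta [Hs Hside]]]]]]].
  split; [exact Hcr |].
  destruct (cont2_on_iter I J f Hmaps n Hf a l0 Ia Jl0 delta Hdelta) as [d [Hd Hnear]].
  exists d, (Rmin eta d), s; split; [exact Hd |].
  split; [apply Rmin_pos; lra |].
  split; [exact Hs |].
  intros l Hl.
  pose proof (Rmin_l eta d); pose proof (Rmin_r eta d).
  destruct (Hside l ltac:(lra)) as [Jl Hnone]; split; [exact Jl |].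
  intros b Hb Hcrb.
  assert (Hld : Rabs (l - l0) < d) by (destruct Hs as [-> | ->]; split_Rabs; lra).
  apply (Hnone (Nat.iter n (fam f l) b)).
  - apply Hnear; auto.
    apply (chain_recurrent_in I (fam f l) b Hcrb).
  - apply chain_recurrent_iter; [intros t It; apply Hmaps; auto | | exact Hcrb].
    apply (cont2_on_fam I J); auto.
Qed.

Theorem mainTheorem9
  (I J : R -> Prop) (f fx : R -> R -> R) (l0 : R)
  (x : R -> R) (y w : R) (z : nat -> R) (L : nat) :
  is_interval I -> is_interval J -> J l0 ->
  (* (H1) *) C1_family_C2 I J f fx ->
  (* (H2) *) not_const_on_intervals I (fam f l0) ->
  (* (H3) *) H3 I J f fx l0 ->
  (* (H4) *) (forall l, J l -> repelling_fixed I f fx l (x l)) -> cont_on J x ->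
             homoclinic_point I f l0 (x l0) y ->
  (* (H5) *) only_one_crit_on_orbits I f fx l0 (x l0) y ->
  (* (H6) *) HomOrbit I f l0 (x l0) z -> z L = w -> fx w l0 = 0 ->
  chain_explosion I J f w l0 ->
  forall k, (L <= k)%nat -> chain_explosion I J f (z k) l0.
Proof.
  intros HI _ Jl0 [Hmaps [Hdx [[fl [Hdl [Hfx _]]] _]]] _ _ Hrep _ _ _ Hz Hw _ Hexpl k Hk.
  assert (Hf : cont2_on I J f).
  { apply (cont2_on_of_partial_derivative I J f fx); auto using is_interval_convex.
    intros t It; exact (deriv_on_cont_on J (f t) (fl t) (Hdl t It)). }
  assert (Hfix : f (x l0) l0 = x l0) by apply (Hrep l0 Jl0).
  assert (Hto_w : Nat.iter (k - L) (fam f l0) (z k) = w).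
  { rewrite <- Hw, <- (HomOrbit_iter _ _ _ _ _ Hz (k - L) L); do 2 f_equal; lia. }
  pose proof Hz as [_ [zI _]].
  apply (chain_explosion_of_iter I J f l0 (k - L)); auto.
  - apply (HomOrbit_chain_recurrent I f l0 (x l0)); auto.
  - rewrite Hto_w; exact Hexpl.
Qed.
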